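(* Let $q$ be an odd prime power, $d\ge 2$ an even integer, and $A\subset\mathbb F_q^d$. Let $\mathcal{SQ}(A)$ and $\mathcal{ZR}(A)$ be the number of pairs $(x,y)\in A\times A$ with $\eta(\|x-y\|)=1$ and with $\eta(\|x-y\|)=0$, respectively. Let $\Omega^+(A)=\sum_{m:\ \eta(\|m\|)=1}|\widehat A(m)|^2$ and $\Omega^-(A)=\sum_{m:\ \eta(\|m\|)=-1}|\widehat A(m)|^2$ (sums over $m\in\mathbb F_q^d$). Then \begin{enumerate} \item $$\mathcal{SQ}(A)+\frac{\mathcal{ZR}(A)}{2}=\frac{|A|^2}{2}+\frac{q^{d-1}G_1^{d+2}}{2}\Omega^+(A)-\frac{q^{d-1}G_1^{d+2}}{2}\Omega^-(A).$$ \item In particular, if $d\equiv 2\pmod 4$, then $$\mathcal{SQ}(A)+\frac{\mathcal{ZR}(A)}{2}=\frac{|A|^2}{2}+\frac{q^{\frac{3d}{2}}}{2}\Omega^+(A)-\frac{q^{\frac{3d}{2}}}{2}\Omega^-(A).$$ \end{enumerate}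
   Context: For $x\in\mathbb F_q^d$, $\|x\|=x_1^2+\cdots+x_d^2$. $\eta$ is the quadratic character of $\mathbb F_q$ with $\eta(0)=0$. $\chi$ is the canonical nontrivial additive character of $\mathbb F_q$; $G_1=\sum_{s\in\mathbb F_q^*}\eta(s)\chi(s)$ is the Gauss sum. For $A\subset\mathbb F_q^d$, $\widehat{A}(m)=q^{-d}\sum_{x\in A}\chi(-m\cdot x)$ is the Fourier transform of the indicator function of $A$. *)

From HB Require Import structures.
From mathcomp Require Import all_boot all_order all_algebra algC.
Set Implicit Arguments. Unset Strict Implicit. Unset Printing Implicit Defensive.
Import Order.TTheory GRing.Theory Num.Theory.
Local Open Scope ring_scope.

Section Defs.
Variable F : finFieldType.

(* q = |F|, p = characteristic (smallest prime divisor of q), q = p^n *)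
Definition qF : nat := #|F|.
Definition pF : nat := pdiv #|F|.
Definition nF : nat := logn pF #|F|.

(* absolute trace F -> F_p (as an element of F) *)
Definition abs_trace (x : F) : F := \sum_(i < nF) x ^+ (pF ^ i).

(* the natural number k < p with k%:R = Tr x *)
Definition trace_nat (x : F) : nat :=
  \sum_(k < pF | (k%:R : F) == abs_trace x) k.

(* canonical additive character chi(x) = exp(2 pi i Tr(x)/p);
   (pF.-root (-1)) is exp(i pi / p) in algC *)
Definition omegaF : algC := (pF.-root (-1 : algC)) ^+ 2.
Definition chi (x : F) : algC := omegaF ^+ trace_nat x.

Definition eta (x : F) : algC :=
  if x == 0 then 0 else if [exists y : F, y ^+ 2 == x] then 1 else -1.

Definition G1 : algC := \sum_(s : F | s != 0) eta s * chi s.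

Variable d : nat.

Definition vnorm (x : 'rV[F]_d) : F := \sum_(i < d) x ord0 i ^+ 2.
Definition vdot (m x : 'rV[F]_d) : F := \sum_(i < d) m ord0 i * x ord0 i.

Definition fhat (A : {set 'rV[F]_d}) (m : 'rV[F]_d) : algC :=
  (qF%:R ^+ d)^-1 * \sum_(x in A) chi (- vdot m x).

Definition SQ (A : {set 'rV[F]_d}) : nat :=
  #|[set xy in setX A A | eta (vnorm (xy.1 - xy.2)) == 1]|.
Definition ZR (A : {set 'rV[F]_d}) : nat :=
  #|[set xy in setX A A | eta (vnorm (xy.1 - xy.2)) == 0]|.

Definition OmegaP (A : {set 'rV[F]_d}) : algC :=
  \sum_(m : 'rV[F]_d | eta (vnorm m) == 1) `|fhat A m| ^+ 2.
Definition OmegaM (A : {set 'rV[F]_d}) : algC :=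
  \sum_(m : 'rV[F]_d | eta (vnorm m) == -1) `|fhat A m| ^+ 2.
End Defs.

(* The quadratic Gauss sum G = Σ_s η(s)χ(s) satisfies Σ_s η(s)χ(st) = η(t)G and
   G² = η(-1)q, so η(t) = G⁻¹ Σ_s η(s)χ(st).  Substituting this into the Fourier
   transform of z ↦ η(‖z‖), the inner sums Σ_z χ(s‖z‖ - m·z) split over the d
   coordinates into one-dimensional Gauss sums, evaluated by completing the square;
   for even d the transform is G^d η(-1) η(‖m‖).  Orthogonality of characters then
   gives Σ_{x,y ∈ A} η(‖x - y‖) = q^(d-1) G^(d+2) Σ_m η(‖m‖)|Â(m)|², and
   SQ(A) + ZR(A)/2 is the sum over pairs of the weight (1 + η(‖x - y‖))/2.
   When d ≡ 2 (mod 4), G^(d+2) = (G⁴)^((d+2)/4) = q^((d+2)/2).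
   That χ is a character at all rests on the absolute trace taking values in
   the prime field. *)

From Pilot Require Import Defs.
From HB Require Import structures.
From mathcomp Require Import all_boot all_order all_algebra algC.
From mathcomp Require Import finfield ring zify.
Set Implicit Arguments. Unset Strict Implicit. Unset Printing Implicit Defensive.
Import Order.TTheory GRing.Theory Num.Theory.
Local Open Scope ring_scope.

Lemma natr_inj_pchar (R : nzRingType) (p k l : nat) : p \in [pchar R] ->
  (k < p)%N -> (l < p)%N -> k%:R = l%:R :> R -> k = l.
Proof.
move=> charRp; wlog kl : k l / (k <= l)%N => [IH kp lp e|kp lp e].
  by case: (leqP k l) => [/IH|/ltnW/IH]; [apply | move=> H; apply/esym/H].
have : (p %| l - k)%N by rewrite (dvdn_pcharf charRp) natrB // e subrr.
by rewrite /dvdn modn_small; [move/eqP; lia | lia].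
Qed.

(* The p distinct elements k%:R, k < p, already exhaust the roots of 'X^p - 'X. *)
Lemma pFrobenius_fixed_nat (R : idomainType) (p : nat) (y : R) :
  p \in [pchar R] -> y ^+ p = y -> exists2 k, (k < p)%N & y = k%:R.
Proof.
move=> charRp yp; have p_gt1 := prime_gt1 (pcharf_prime charRp).
pose s := [seq (k%:R : R) | k <- iota 0 p].
have [/mapP[k + ->]|ys] := boolP (y \in s); first by rewrite mem_iota; exists k.
have P_neq0 : 'X^p - 'X != 0 :> {poly R}.
  by rewrite -size_poly_eq0 size_polyDl ?size_polyXn // size_polyN size_polyX.
suff: (size (y :: s) < size (('X^p - 'X)%R : {poly R}))%N.
  by rewrite size_polyDl ?size_polyXn ?size_polyN ?size_polyX //= size_map size_iota ltnn.
apply: max_poly_roots P_neq0 _ _ => /=.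
  rewrite rootE !hornerE yp subrr eqxx /=; apply/allP=> _ /mapP[k _ ->].
  by rewrite rootE !hornerE -(pFrobenius_autE charRp) pFrobenius_aut_nat subrr.
rewrite ys map_inj_in_uniq ?iota_uniq // => k l; rewrite !mem_iota /=.
exact: natr_inj_pchar.
Qed.

Section AbsoluteTrace.
Variable F : finFieldType.
Local Notation p := (pF F).
Local Notation n := (nF F).

Lemma pF_pchar_card : p \in [pchar F] /\ #|F| = (p ^ n)%N.
Proof.
have [p0 p0_prime charFp0] := finPcharP F; have cardF := card_pprimeChar charFp0.
have logn_gt0 : (0 < logn p0 #|F|)%N.
  by rewrite lt0n; apply: contraTneq (finNzRing_gt1 F) => e; rewrite cardF e.
suff pE : p = p0 by rewrite /nF pE.
by rewrite /pF cardF -(prednK logn_gt0) pdiv_pfactor.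
Qed.

Lemma pF_pchar : p \in [pchar F]. Proof. by case: pF_pchar_card. Qed.
Lemma pF_prime : prime p. Proof. exact: pcharf_prime pF_pchar. Qed.
Lemma cardF_pF : #|F| = (p ^ n)%N. Proof. by case: pF_pchar_card. Qed.

Lemma nF_gt0 : (0 < n)%N.
Proof. by rewrite lt0n; apply: contraTneq (finNzRing_gt1 F); rewrite cardF_pF => ->. Qed.

Lemma abs_traceD (x y : F) : abs_trace (x + y) = abs_trace x + abs_trace y.
Proof.
rewrite /abs_trace -big_split; apply: eq_bigr => i _; apply: exprDn_pchar.
by rewrite pnatX pnatE ?pF_prime // pF_pchar.
Qed.

Lemma abs_trace0 : abs_trace (0 : F) = 0.
Proof.
by rewrite /abs_trace big1 // => i _; rewrite expr0n expn_eq0 (gtn_eqF (prime_gt0 pF_prime)).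
Qed.

(* Frobenius permutes the conjugates x^(p^i), i < n, cyclically since x^(p^n) = x. *)
Lemma abs_trace_frob (x : F) : abs_trace x ^+ p = abs_trace x.
Proof.
rewrite -(pFrobenius_autE pF_pchar) /abs_trace rmorph_sum /=.
under eq_bigr => i _ do rewrite pFrobenius_autE -exprM -expnSr.
have := cardF_pF; case: n nF_gt0 => // m _ cardF.
rewrite big_ord_recr big_ord_recl /= -cardF expf_card expn0 expr1 addrC.
by congr (_ + _); apply: eq_bigr.
Qed.

Lemma abs_trace_nat (x : F) : exists2 k, (k < p)%N & abs_trace x = k%:R.
Proof. exact: pFrobenius_fixed_nat pF_pchar (abs_trace_frob x). Qed.

Lemma trace_natE (x : F) (k : nat) :
  (k < p)%N -> abs_trace x = k%:R -> trace_nat x = k.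
Proof.
move=> kp xE; rewrite /trace_nat xE (big_pred1 (Ordinal kp)) // => i /=.
by apply/eqP/eqP => [/(natr_inj_pchar pF_pchar (ltn_ord i) kp) iE|->]; first exact: val_inj.
Qed.

(* The trace polynomial has degree p^(n-1) < #|F|, so it cannot vanish on all of F. *)
Lemma abs_trace_neq0 : exists x : F, abs_trace x != 0.
Proof.
apply/existsP; apply: contraT; rewrite negb_exists => /forallP /= trace0.
pose T : {poly F} := \sum_(i < n) 'X^(p ^ i).
have p_gt1 := prime_gt1 pF_prime; have n1_lt_n : (n.-1 < n)%N by rewrite prednK ?nF_gt0.
have T_neq0 : T != 0.
  apply/eqP => /(congr1 (fun P : {poly F} => P`_(p ^ n.-1))).
  rewrite coef0 /T coef_sum (bigD1 (Ordinal n1_lt_n)) //= coefXn eqxx big1 ?addr0.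
    by move/eqP; rewrite oner_eq0.
  move=> i /eqP i_neq; rewrite coefXn eqn_exp2l //.
  by case: eqP => // iE; case: i_neq; apply/val_inj.
have sizeT : (size T <= (p ^ n.-1).+1)%N.
  apply: leq_trans (size_sum _ _ _) _; apply/bigmax_leqP => i _.
  by rewrite size_polyXn ltnS leq_exp2l // -ltnS prednK ?nF_gt0.
have rootsT : all (root T) (enum F).
  apply/allP => x _; rewrite rootE /T horner_sum.
  under eq_bigr do rewrite hornerXn.
  by move: (trace0 x); rewrite negbK.
have := leq_trans (max_poly_roots T_neq0 rootsT (enum_uniq F)) sizeT.
by rewrite -cardE cardF_pF ltnS leq_exp2l // leqNgt n1_lt_n.
Qed.

End AbsoluteTrace.

Lemma prime_unity_root_prim (R : idomainType) (p : nat) (z : R) :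
  prime p -> z ^+ p = 1 -> z != 1 -> p.-primitive_root z.
Proof.
move=> p_prime zp z_neq1; have [m prim_m m_dvd_p] := prim_order_exists (prime_gt0 p_prime) zp.
have [m1|/(prime_nt_dvdP p_prime)/(_ m_dvd_p) <- //] := eqVneq m 1%N.
by move: (prim_expr_order prim_m); rewrite m1 expr1 => z1; rewrite z1 eqxx in z_neq1.
Qed.

Lemma conjC_unity_root (z : algC) (n : nat) : (0 < n)%N -> z ^+ n = 1 -> z^* = z^-1.
Proof.
move=> n_gt0 zn; have normz : `|z| = 1.
  by apply/eqP; rewrite -(pexpr_eq1 n_gt0) ?normr_ge0 // -normrX zn normr1.
by rewrite invC_norm normz expr1n invr1 mul1r.
Qed.

Section AdditiveCharacter.
Variable F : finFieldType.
Local Notation p := (pF F).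
Local Notation chi := (@Defs.chi F).

Lemma omegaF_prim : p.-primitive_root (omegaF F).
Proof.
have p_gt1 := prime_gt1 (pF_prime F).
have rootK : p.-root (-1 : algC) ^+ p = -1 by rewrite rootCK // ltnW.
apply: prime_unity_root_prim (pF_prime F) _ _.
  by rewrite /omegaF -exprM mulnC exprM rootK sqrrN expr1n.
rewrite /omegaF sqrf_eq1; apply/norP; split; apply/eqP => root1.
  by move: rootK; rewrite root1 expr1n => /eqP; rewrite -addr_eq0 -mulr2n pnatr_eq0.
by move: (rootC_lt0 (-1 : algC) p_gt1); rewrite root1 ltrN10.
Qed.

Lemma chi_natE (x : F) (k : nat) : abs_trace x = k%:R -> chi x = omegaF F ^+ k.
Proof.
have [l lp xE] := abs_trace_nat x; rewrite /Defs.chi (trace_natE lp xE) xE => lk.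
rewrite -(expr_mod k (prim_expr_order omegaF_prim)); congr (_ ^+ _).
apply: natr_inj_pchar (pF_pchar F) lp _ _; first by rewrite ltn_mod prime_gt0 ?pF_prime.
by rewrite lk (GRing.natr_mod_pchar (pF_pchar F)).
Qed.

Lemma chiD (x y : F) : chi (x + y) = chi x * chi y.
Proof.
have [k _ xE] := abs_trace_nat x; have [l _ yE] := abs_trace_nat y.
by rewrite (chi_natE xE) (chi_natE yE) -exprD; apply: chi_natE; rewrite abs_traceD xE yE natrD.
Qed.

Lemma chi0 : chi 0 = 1.
Proof. by rewrite (@chi_natE 0 0) ?abs_trace0. Qed.

Lemma chi_sum (I : Type) (r : seq I) (P : pred I) (f : I -> F) :
  chi (\sum_(i <- r | P i) f i) = \prod_(i <- r | P i) chi (f i).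
Proof. exact: (big_morph chi chiD chi0). Qed.

Lemma chiN (x : F) : chi (- x) = (chi x)^-1.
Proof. by apply/esym/mulr1_eq; rewrite -chiD subrr chi0. Qed.

Lemma chi_conj (x : F) : (chi x)^* = chi (- x).
Proof.
rewrite chiN (@conjC_unity_root _ p) ?prime_gt0 ?pF_prime //.
by rewrite /Defs.chi -exprM mulnC exprM (prim_expr_order omegaF_prim) expr1n.
Qed.

Lemma chi_neq1 : exists x : F, chi x != 1.
Proof.
have [x trx_neq0] := abs_trace_neq0 F; have [k _ xE] := abs_trace_nat x.
exists x; rewrite (chi_natE xE) -(prim_order_dvd omegaF_prim).
by apply: contra trx_neq0; rewrite xE -(dvdn_pcharf (pF_pchar F)).
Qed.

Lemma sum_chi : \sum_(x : F) chi x = 0.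
Proof.
have [a chia_neq1] := chi_neq1.
have shift : \sum_(x : F) chi x = chi a * \sum_(x : F) chi x.
  by rewrite {1}(reindex_inj (addrI a)) mulr_sumr; apply: eq_bigr => x _; rewrite chiD.
apply/eqP; move/eqP: shift; rewrite -subr_eq0 -{1}[\sum_x _]mul1r -mulrBl mulf_eq0.
by rewrite subr_eq0 eq_sym (negbTE chia_neq1).
Qed.

Lemma sum_chiM (a : F) : \sum_(x : F) chi (x * a) = (a == 0)%:R * #|F|%:R.
Proof.
have [->|a_neq0] := eqVneq a 0.
  by under eq_bigr do rewrite mulr0 chi0; rewrite sumr_const mul1r.
by rewrite mul0r -[RHS]sum_chi [RHS](reindex_inj (mulIf a_neq0)).
Qed.
End AdditiveCharacter.

Section QuadraticCharacter.
Variable F : finFieldType.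
Hypothesis oddF : odd #|F|.
Local Notation h := (#|F|./2).
Local Notation eta := (@Defs.eta F).

Definition is_sqr (x : F) := [exists y : F, y ^+ 2 == x].

Lemma two_neq0F : (2%:R : F) != 0.
Proof.
rewrite -(dvdn_pcharf (pF_pchar F)) dvdn_prime2 ?pF_prime //.
apply: contraTneq oddF => p2.
by rewrite cardF_pF p2 -(prednK (nF_gt0 F)) expnS oddM.
Qed.

Lemma four_neq0F : (4 : F) != 0.
Proof. by rewrite (natrM _ 2 2) mulf_neq0 // two_neq0F. Qed.

Lemma half_card_gt0 : (0 < h)%N.
Proof.
by rewrite -double_gt0 (odd_halfK oddF) -subn1 subn_gt0 (finNzRing_gt1 F).
Qed.

Lemma expf_card_pred (x : F) : x != 0 -> x ^+ #|F|.-1 = 1.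
Proof.
move=> x_neq0; apply: (mulfI x_neq0).
by rewrite -exprS prednK ?expf_card ?mulr1 // ltnW ?(finNzRing_gt1 F).
Qed.

Lemma card_sqrt (t : F) : #|[set y : F | y ^+ 2 == t]| =
  if t == 0 then 1%N else if is_sqr t then 2%N else 0%N.
Proof.
have [->|t_neq0] := eqVneq t 0.
  rewrite (_ : [set y : F | y ^+ 2 == 0] = [set 0]) ?cards1 //.
  by apply/setP => y; rewrite !inE sqrf_eq0.
case: ifP => [/existsP[y /eqP yt]|t_nsqr]; last first.
  apply/eqP; rewrite cards_eq0; apply/eqP/setP => y; rewrite !inE.
  by apply: contraFF t_nsqr => y2t; apply/existsP; exists y.
have y_neq0 : y != 0 by apply: contra_neq t_neq0 => y0; rewrite -yt y0 expr0n.
have -> : [set z : F | z ^+ 2 == t] = [set y; - y].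
  by apply/setP => z; rewrite !inE -yt eqf_sqr.
rewrite cards2; case: eqP => // yNy; case/negP: y_neq0.
have : 2%:R * y == 0 by rewrite mulr_natl mulr2n {2}yNy subrr.
by rewrite mulf_eq0 (negbTE two_neq0F).
Qed.

Lemma card_sqr_neq0 : #|[set x : F | (x != 0) && is_sqr x]| = h.
Proof.
suff cardF : #|F| = (1 + #|[set x : F | (x != 0%R) && is_sqr x]| * 2)%N.
  by rewrite cardF muln2 (half_bit_double _ true).
rewrite -[LHS]sum1_card (partition_big (fun y : F => y ^+ 2) predT) //=.
rewrite (eq_bigr (fun t => #|[set y : F | y ^+ 2 == t]|)); last first.
  by move=> t _; rewrite -sum1_card; apply: eq_bigl => y; rewrite inE.
under eq_bigr do rewrite card_sqrt.
rewrite (bigD1 0) //= eqxx -sum_nat_const; congr (_ + _)%N.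
rewrite big_mkcond [RHS]big_mkcond; apply: eq_bigr => t _.
by rewrite inE; case: (t == 0); case: (is_sqr t).
Qed.

(* The h nonzero squares are roots of 'X^h - 1, which has at most h roots. *)
Lemma is_sqr_euler (x : F) : x != 0 -> is_sqr x = (x ^+ h == 1).
Proof.
move=> x_neq0; pose S := [set x : F | (x != 0) && is_sqr x].
pose R := [set x : F | root ('X^h - 1%:P) x].
have sub_SR : S \subset R.
  apply/subsetP => z; rewrite !inE => /andP[z_neq0 /existsP[y /eqP yz]].
  have y_neq0 : y != 0 by apply: contra_neq z_neq0 => y0; rewrite -yz y0 expr0n.
  by rewrite rootE !hornerE -yz -exprM mul2n (odd_halfK oddF) expf_card_pred // subrr.
have cardR : (#|R| <= h)%N.
  rewrite -ltnS cardE -(size_XnsubC (1 : F) half_card_gt0).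
  apply: max_poly_roots; last exact: enum_uniq.
    by rewrite -size_poly_eq0 size_XnsubC // half_card_gt0.
  by apply/allP => z; rewrite mem_enum inE.
have SR : S =i R.
  apply/subset_cardP => //; apply/eqP.
  by rewrite eqn_leq card_sqr_neq0 cardR -card_sqr_neq0 subset_leq_card.
by have := SR x; rewrite !inE x_neq0 rootE !hornerE subr_eq0.
Qed.

Lemma eta0 : eta 0 = 0. Proof. by rewrite /Defs.eta eqxx. Qed.

Lemma eta_neq0E (x : F) : x != 0 -> eta x = if x ^+ h == 1 then 1 else -1.
Proof. by move=> x_neq0; rewrite /Defs.eta (negbTE x_neq0) -/(is_sqr x) is_sqr_euler. Qed.

Lemma expr_half_card (x : F) : x != 0 -> x ^+ h = 1 \/ x ^+ h = -1.
Proof.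
move=> x_neq0; have := expf_card_pred x_neq0.
by move/eqP; rewrite -(odd_halfK oddF) -muln2 exprM sqrf_eq1 => /orP[] /eqP; [left | right].
Qed.

Lemma etaM (x y : F) : eta (x * y) = eta x * eta y.
Proof.
have [->|x_neq0] := eqVneq x 0; first by rewrite mul0r eta0 mul0r.
have [->|y_neq0] := eqVneq y 0; first by rewrite mulr0 eta0 mulr0.
have m1_neq1 : (-1 : F) != 1.
  by rewrite -subr_eq0 -opprD oppr_eq0 -mulr2n two_neq0F.
rewrite !eta_neq0E ?mulf_neq0 // exprMn.
by case: (expr_half_card x_neq0) => ->; case: (expr_half_card y_neq0) => ->;
  rewrite ?(mulr1, mul1r, mulrNN, mulN1r, eqxx, (negbTE m1_neq1)) ?(mulr1, mulrNN).
Qed.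

Lemma eta_sqr (y : F) : y != 0 -> eta (y ^+ 2) = 1.
Proof.
move=> y_neq0; rewrite /Defs.eta sqrf_eq0 (negbTE y_neq0).
by case: existsP => // -[]; exists y.
Qed.

Lemma eta_neq0_sqr (x : F) : x != 0 -> eta x ^+ 2 = 1.
Proof. by move=> x_neq0; rewrite expr2 -etaM -expr2 eta_sqr. Qed.

Lemma eta_expr_even (x : F) (n : nat) : x != 0 -> ~~ odd n -> eta x ^+ n = 1.
Proof. by move=> x_neq0 /even_halfK <-; rewrite -mul2n exprM eta_neq0_sqr // expr1n. Qed.

Lemma etaV (x : F) : eta x^-1 = eta x.
Proof.
have [->|x_neq0] := eqVneq x 0; first by rewrite invr0.
have -> : x^-1 = x * x^-1 ^+ 2 by rewrite expr2 mulrA mulfV // mul1r.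
by rewrite etaM eta_sqr ?invr_eq0 // mulr1.
Qed.

Lemma sum_sqr (f : F -> algC) :
  \sum_(y : F) f (y ^+ 2) = \sum_(t : F) (1 + eta t) * f t.
Proof.
rewrite (partition_big (fun y : F => y ^+ 2) predT) //=; apply: eq_bigr => t _.
rewrite (eq_bigr (fun _ => f t)); last by move=> y /eqP ->.
rewrite sumr_const (eq_card (B := [set y : F | y ^+ 2 == t])); last by move=> y; rewrite inE.
rewrite card_sqrt /Defs.eta -/(is_sqr t); case: (t == 0); first by rewrite addr0 mul1r.
by case: (is_sqr t); rewrite ?subrr ?mul0r // -mulr_natl (natrD _ 1 1).
Qed.

Lemma sum_eta : \sum_(t : F) eta t = 0.
Proof.
have : \sum_(t : F) (1 : algC) = \sum_(t : F) (1 + eta t).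
  by rewrite (sum_sqr (fun _ => 1)); apply: eq_bigr => t _; rewrite mulr1.
by rewrite big_split /= => /eqP; rewrite -subr_eq0 opprD addrA subrr add0r oppr_eq0 => /eqP.
Qed.

End QuadraticCharacter.

Section GaussSum.
Variable F : finFieldType.
Hypothesis oddF : odd #|F|.
Local Notation q := (#|F|%:R : algC).
Local Notation eta := (@Defs.eta F).
Local Notation chi := (@Defs.chi F).
Local Notation G := (G1 F).

Lemma G1E : G = \sum_(s : F) eta s * chi s.
Proof. by rewrite /G1 [RHS](bigD1 0) //= eta0 mul0r add0r. Qed.

Lemma sum_eta_chiM (t : F) : \sum_(s : F) eta s * chi (s * t) = eta t * G.
Proof.
have [->|t_neq0] := eqVneq t 0.
  by under eq_bigr do rewrite mulr0 chi0 mulr1; rewrite (sum_eta oddF) eta0 mul0r.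
rewrite (reindex_inj (mulIf (invr_neq0 t_neq0))) G1E mulr_sumr; apply: eq_bigr => s _.
by rewrite mulfVK // (etaM oddF) (etaV oddF) mulrAC mulrC.
Qed.

(* After exchanging the sums, Σ_t χ(t(s+1)) vanishes unless s = -1. *)
Lemma G1_sqr : G ^+ 2 = eta (-1) * q.
Proof.
transitivity (\sum_(t : F) \sum_(s : F) eta s * chi (t * (s + 1))).
  rewrite expr2 {1}G1E mulr_suml; apply: eq_bigr => t _.
  rewrite mulrAC -sum_eta_chiM mulr_suml; apply: eq_bigr => s _.
  by rewrite -mulrA -chiD; congr (_ * chi _); ring.
rewrite exchange_big /=; under eq_bigr do rewrite -mulr_sumr sum_chiM.
rewrite (bigD1 (-1)) //= addNr eqxx mul1r big1 ?addr0 // => s s_neqN1.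
by rewrite addr_eq0 (negbTE s_neqN1) mul0r mulr0.
Qed.

Lemma q_neq0 : q != 0.
Proof. by rewrite pnatr_eq0 -lt0n ltnW ?(finNzRing_gt1 F). Qed.

Lemma etaN1_sqr : eta (-1) ^+ 2 = 1.
Proof. by rewrite (eta_neq0_sqr oddF) // oppr_eq0 oner_eq0. Qed.

Lemma G1_neq0 : G != 0.
Proof.
have etaN1_neq0 : eta (-1) != 0.
  by apply: contra_eq_neq etaN1_sqr => ->; rewrite expr0n eq_sym oner_eq0.
apply: contraNneq (mulf_neq0 etaN1_neq0 q_neq0) => G0.
by rewrite -G1_sqr G0 expr0n.
Qed.

Lemma G1_expr4 : G ^+ 4 = q ^+ 2.
Proof. by rewrite (exprM G 2 2) G1_sqr exprMn etaN1_sqr mul1r. Qed.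

Lemma sum_chi_sqr (s : F) : s != 0 -> \sum_(z : F) chi (s * z ^+ 2) = eta s * G.
Proof.
move=> s_neq0; rewrite (sum_sqr oddF (fun t => chi (s * t))).
under eq_bigr do rewrite mulrDl mul1r.
rewrite big_split /= -sum_eta_chiM.
under eq_bigr do rewrite mulrC.
by rewrite sum_chiM (negbTE s_neq0) mul0r add0r; apply: eq_bigr => t _; rewrite (mulrC s).
Qed.

Lemma sum_chi_quadratic (s m : F) : s != 0 ->
  \sum_(z : F) chi (s * z ^+ 2 - m * z) = eta s * G * chi (- m ^+ 2 / (4 * s)).
Proof.
move=> s_neq0; rewrite (reindex_inj (addrI (m / (2 * s)))) /=.
have square z : s * (m / (2 * s) + z) ^+ 2 - m * (m / (2 * s) + z)
    = s * z ^+ 2 + - m ^+ 2 / (4 * s).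
  by field; rewrite s_neq0 (four_neq0F oddF) (two_neq0F oddF).
under eq_bigr do rewrite square chiD.
by rewrite -mulr_suml sum_chi_sqr.
Qed.

Lemma etaE (t : F) : eta t = G^-1 * \sum_(s : F) eta s * chi (s * t).
Proof. by rewrite sum_eta_chiM mulrC mulfK // G1_neq0. Qed.

Lemma sum_eta_chi_div (c : F) :
  \sum_(s : F) eta s * chi (- c / (4 * s)) = eta (-1) * eta c * G.
Proof.
(* Substitute s = -(4u)^-1; this involution also fixes 0, as 0^-1 = 0. *)
pose sigma (u : F) := - (4 * u)^-1.
have sigmaK : involutive sigma.
  move=> u; rewrite /sigma; have [->|u_neq0] := eqVneq u 0.
    by rewrite !(mulr0, invr0, oppr0).
  by field; rewrite u_neq0 (four_neq0F oddF) oppr_eq0 oner_eq0.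
rewrite (reindex_inj (can_inj sigmaK)) -mulrA -sum_eta_chiM mulr_sumr; apply: eq_bigr => u _.
have [->|u_neq0] := eqVneq u 0; first by rewrite /sigma !(mulr0, invr0, oppr0, eta0, mul0r).
rewrite /sigma; have -> : - c / (4 * - (4 * u)^-1) = u * c.
  by field; rewrite u_neq0 (four_neq0F oddF) oppr_eq0 oner_eq0.
have two_u_neq0 : 2%:R * u != 0 by rewrite mulf_neq0 // (two_neq0F oddF).
have -> : - (4 * u)^-1 = -1 * u * (2%:R * u)^-1 ^+ 2.
  by field; rewrite u_neq0 (two_neq0F oddF) (four_neq0F oddF).
by rewrite (etaM oddF (-1 * u)) eta_sqr ?invr_eq0 // mulr1 (etaM oddF) mulrA.
Qed.

End GaussSum.

Lemma sum_rV_prod (T : finType) (R : comPzSemiRingType) (d : nat) (f : 'I_d -> T -> R) :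
  \sum_(z : 'rV[T]_d) \prod_(i < d) f i (z ord0 i) = \prod_(i < d) \sum_(t : T) f i t.
Proof.
rewrite bigA_distr_bigA (reindex (fun z : 'rV[T]_d => [ffun i => z ord0 i])) /=.
  by apply: eq_bigr => z _; apply: eq_bigr => i _; rewrite ffunE.
exists (fun g : {ffun 'I_d -> T} => \row_i g i) => [z _|g _].
  by apply/rowP => i; rewrite mxE ffunE.
by apply/ffunP => i; rewrite ffunE mxE.
Qed.

Section CharacterSumsOnVectors.
Variables (F : finFieldType) (d : nat).
Local Notation q := (#|F|%:R : algC).
Local Notation eta := (@Defs.eta F).
Local Notation chi := (@Defs.chi F).
Local Notation G := (G1 F).
Local Notation vnorm := (@vnorm F d).
Local Notation vdot := (@vdot F d).

Lemma sum_chi_vdot (w : 'rV[F]_d) :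
  \sum_(m : 'rV[F]_d) chi (vdot m w) = (w == 0)%:R * q ^+ d.
Proof.
under eq_bigr do rewrite chi_sum.
rewrite (sum_rV_prod (fun i t => chi (t * w ord0 i))).
under eq_bigr do rewrite sum_chiM.
have [->|w_neq0] := eqVneq w 0.
  by under eq_bigr do rewrite mxE eqxx mul1r; rewrite prodr_const card_ord mul1r.
have [i wi_neq0] : exists i, w ord0 i != 0.
  apply/existsP; apply: contraNT w_neq0 => /existsPn wi0.
  by apply/eqP/rowP => i; rewrite mxE; apply/eqP/negPn/wi0.
by rewrite (bigD1 i) //= (negbTE wi_neq0) !mul0r.
Qed.

Lemma sum_chi_vnorm_vdot (s : F) (m : 'rV[F]_d) : odd #|F| -> s != 0 ->
  \sum_(z : 'rV[F]_d) chi (s * vnorm z - vdot m z)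
    = (eta s * G) ^+ d * chi (- vnorm m / (4 * s)).
Proof.
move=> oddF s_neq0.
transitivity (\sum_(z : 'rV[F]_d) \prod_(i < d) chi (s * z ord0 i ^+ 2 - m ord0 i * z ord0 i)).
  apply: eq_bigr => z _; rewrite /Defs.vnorm /Defs.vdot mulr_sumr -sumrB chi_sum.
  by apply: eq_bigr => i _; rewrite mulrC.
rewrite (sum_rV_prod (fun i t => chi (s * t ^+ 2 - m ord0 i * t))).
under eq_bigr do rewrite (sum_chi_quadratic oddF _ s_neq0).
rewrite big_split /= prodr_const card_ord -chi_sum; congr (_ * chi _).
by rewrite /Defs.vnorm -sumrN mulr_suml.
Qed.

Lemma fourier_eta_vnorm (m : 'rV[F]_d) : odd #|F| -> ~~ odd d ->
  \sum_(z : 'rV[F]_d) eta (vnorm z) * chi (- vdot m z) = G ^+ d * eta (-1) * eta (vnorm m).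
Proof.
move=> oddF evend.
transitivity (G^-1 * \sum_(s : F) eta s * \sum_z chi (s * vnorm z - vdot m z)).
  under eq_bigr do rewrite (etaE oddF) -mulrA mulr_suml.
  rewrite -mulr_sumr exchange_big; congr (_ * _); apply: eq_bigr => s _.
  by rewrite mulr_sumr; apply: eq_bigr => z _; rewrite -mulrA -chiD.
transitivity (G^-1 * G ^+ d * \sum_(s : F) eta s * chi (- vnorm m / (4 * s))).
  rewrite -mulrA; congr (_ * _); rewrite mulr_sumr; apply: eq_bigr => s _.
  have [->|s_neq0] := eqVneq s 0; first by rewrite eta0 !mul0r mulr0.
  by rewrite sum_chi_vnorm_vdot // exprMn (eta_expr_even oddF) // mul1r mulrCA.
by rewrite (sum_eta_chi_div oddF (vnorm m)); field; rewrite G1_neq0.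
Qed.
End CharacterSumsOnVectors.

Section FourierEnergy.
Variables (F : finFieldType) (d : nat).
Local Notation q := (#|F|%:R : algC).
Local Notation eta := (@Defs.eta F).
Local Notation chi := (@Defs.chi F).
Local Notation G := (G1 F).
Local Notation vnorm := (@vnorm F d).
Local Notation vdot := (@vdot F d).

Lemma vdotBr (m x y : 'rV[F]_d) : vdot m (x - y) = vdot m x - vdot m y.
Proof. by rewrite /Defs.vdot -sumrB; apply: eq_bigr => i _; rewrite !mxE mulrBr. Qed.

Lemma vnormN (x : 'rV[F]_d) : vnorm (- x) = vnorm x.
Proof. by rewrite /Defs.vnorm; apply: eq_bigr => i _; rewrite mxE sqrrN. Qed.

Lemma fhat_sqr_norm (A : {set 'rV[F]_d}) (m : 'rV[F]_d) :
  (q ^+ d) ^+ 2 * `|fhat A m| ^+ 2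
    = (\sum_(x in A) chi (- vdot m x)) * (\sum_(y in A) chi (vdot m y)).
Proof.
rewrite normCK /fhat /qF rmorphM fmorphV rmorphXn rmorph_nat rmorph_sum /=.
under [X in _ * (_ * X)]eq_bigr do rewrite chi_conj opprK.
by field; rewrite expf_neq0 // q_neq0.
Qed.

(* Expanding both sides, the sum over m of χ(m·(y - x - z)) forces z = y - x. *)
Lemma sum_fourier_energy (g : 'rV[F]_d -> algC) (A : {set 'rV[F]_d}) :
  \sum_(m : 'rV[F]_d) (\sum_(z : 'rV[F]_d) g z * chi (- vdot m z)) *
     ((\sum_(x in A) chi (- vdot m x)) * (\sum_(y in A) chi (vdot m y)))
  = q ^+ d * \sum_(x in A) \sum_(y in A) g (y - x).
Proof.
transitivity (\sum_(m : 'rV[F]_d) \sum_(z : 'rV[F]_d) \sum_(x in A) \sum_(y in A)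
    g z * chi (vdot m (y - x - z))).
  apply: eq_bigr => m _; rewrite mulr_suml; apply: eq_bigr => z _.
  rewrite mulr_suml mulr_sumr; apply: eq_bigr => x _.
  rewrite mulr_sumr mulr_sumr; apply: eq_bigr => y _.
  by rewrite !vdotBr !chiD; ring.
transitivity (\sum_(z : 'rV[F]_d) \sum_(x in A) \sum_(y in A)
    g z * ((y - x - z == 0)%:R * q ^+ d)).
  rewrite exchange_big; apply: eq_bigr => z _.
  rewrite exchange_big; apply: eq_bigr => x _.
  rewrite exchange_big; apply: eq_bigr => y _.
  by rewrite -mulr_sumr sum_chi_vdot.
rewrite exchange_big mulr_sumr; apply: eq_bigr => x _.
rewrite exchange_big mulr_sumr; apply: eq_bigr => y _.
rewrite (bigD1 (y - x)) //= subrr eqxx mul1r big1 ?addr0 1?mulrC // => z z_neq.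
by rewrite subr_eq0 eq_sym (negbTE z_neq) mul0r mulr0.
Qed.

Lemma sum_eta_vnorm_pairs (A : {set 'rV[F]_d}) : odd #|F| -> ~~ odd d -> (0 < d)%N ->
  \sum_(x in A) \sum_(y in A) eta (vnorm (x - y))
    = q ^+ (d - 1) * G ^+ (d + 2) * \sum_(m : 'rV[F]_d) eta (vnorm m) * `|fhat A m| ^+ 2.
Proof.
move=> oddF evend d_gt0; have q_neq0 := q_neq0 F.
have qd_neq0 : q ^+ d != 0 by rewrite expf_neq0.
apply: (mulfI qd_neq0).
have -> : \sum_(x in A) \sum_(y in A) eta (vnorm (x - y))
    = \sum_(x in A) \sum_(y in A) eta (vnorm (y - x)).
  by apply: eq_bigr => x _; apply: eq_bigr => y _; rewrite -vnormN opprB.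
rewrite -(sum_fourier_energy (fun z => eta (vnorm z))) !mulr_sumr; apply: eq_bigr => m _.
rewrite fourier_eta_vnorm // -fhat_sqr_norm.
have qdE : q ^+ d = q * q ^+ (d - 1) by rewrite -exprS subn1 prednK.
by rewrite -[eta (-1)](mulfK q_neq0) -G1_sqr // !qdE exprD; field.
Qed.
End FourierEnergy.

Lemma card_pairs_natr (T : finType) (R : pzSemiRingType) (A : {set T})
    (P : T -> T -> bool) :
  #|[set xy in setX A A | P xy.1 xy.2]|%:R = \sum_(x in A) \sum_(y in A) (P x y)%:R :> R.
Proof.
rewrite -sum1_card natr_sum pair_big /= big_mkcond [RHS]big_mkcond.
by apply: eq_bigr => -[x y] _; rewrite !inE /=; case: (x \in A); case: (y \in A); case: (P x y).
Qed.

Lemma N1_neq1C : (-1 : algC) != 1.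
Proof. by rewrite eq_sym -subr_eq0 opprK -mulr2n pnatr_eq0. Qed.

Section PairCount.
Variables (F : finFieldType) (d : nat).
Local Notation q := (#|F|%:R : algC).
Local Notation eta := (@Defs.eta F).
Local Notation G := (G1 F).
Local Notation vnorm := (@vnorm F d).

Lemma eta_weight (t : F) : (eta t == 1)%:R + (eta t == 0)%:R / 2 = (1 + eta t) / 2 :> algC.
Proof.
have two_neq0 : (2 : algC) != 0 by rewrite pnatr_eq0.
rewrite /Defs.eta; case: ifP => _; first by rewrite eq_sym oner_eq0 eqxx add0r addr0 mul1r.
case: ifP => _; first by rewrite eqxx oner_eq0 mul0r addr0 -mulr2n divff.
by rewrite (negbTE N1_neq1C) oppr_eq0 oner_eq0 mul0r addr0 subrr mul0r.
Qed.

Lemma sum_eta_OmegaPM (A : {set 'rV[F]_d}) :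
  \sum_(m : 'rV[F]_d) eta (vnorm m) * `|fhat A m| ^+ 2 = OmegaP A - OmegaM A.
Proof.
rewrite /OmegaP /OmegaM (big_mkcond (fun m => eta (vnorm m) == 1)).
rewrite (big_mkcond (fun m => eta (vnorm m) == -1)) -sumrB; apply: eq_bigr => m _.
rewrite /Defs.eta; case: (vnorm m == 0).
  by rewrite mul0r eq_sym oner_eq0 eq_sym oppr_eq0 oner_eq0 subrr.
case: existsP => _; first by rewrite eqxx mul1r eq_sym (negbTE N1_neq1C) subr0.
by rewrite (negbTE N1_neq1C) eqxx mulN1r sub0r.
Qed.

Lemma SQ_ZR_fourier (A : {set 'rV[F]_d}) : odd #|F| -> ~~ odd d -> (0 < d)%N ->
  (SQ A)%:R + (ZR A)%:R / 2
    = #|A|%:R ^+ 2 / 2 + q ^+ (d - 1) * G ^+ (d + 2) / 2 * OmegaP A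
      - q ^+ (d - 1) * G ^+ (d + 2) / 2 * OmegaM A :> algC.
Proof.
move=> oddF evend d_gt0.
transitivity (\sum_(x in A) \sum_(y in A) (1 + eta (vnorm (x - y))) / 2).
  rewrite /SQ /ZR (card_pairs_natr _ _ (fun x y => eta (vnorm (x - y)) == 1)).
  rewrite (card_pairs_natr _ _ (fun x y => eta (vnorm (x - y)) == 0)) mulr_suml -big_split.
  apply: eq_bigr => x _.
  by rewrite mulr_suml -big_split; apply: eq_bigr => y _; apply: eta_weight.
under eq_bigr do rewrite -mulr_suml big_split /=.
rewrite -mulr_suml big_split /= sum_eta_vnorm_pairs // sum_eta_OmegaPM.
by rewrite !sumr_const [in RHS]expr2 mulr_natr; field.
Qed.

Lemma G1_expr_mod4 : odd #|F| -> (d %% 4)%N = 2%N ->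
  q ^+ (d - 1) * G ^+ (d + 2) = q ^+ (3 * d %/ 2).
Proof.
move=> oddF d_mod4.
have dE : d = (4 * (d %/ 4) + 2)%N by rewrite {1}(divn_eq d 4) d_mod4 mulnC.
have -> : (d + 2 = 4 * (d %/ 4 + 1))%N by rewrite {1}dE; lia.
rewrite exprM (G1_expr4 oddF) -exprM -exprD.
by congr (_ ^+ _); rewrite {3}dE; lia.
Qed.
End PairCount.

Theorem proposition3p3 (F : finFieldType) (d : nat) (A : {set 'rV[F]_d}) :
  odd #|F| -> (2 <= d)%N -> ~~ odd d ->
  ((SQ A)%:R + (ZR A)%:R / 2
     = (#|A|%:R ^+ 2) / 2
       + (qF F)%:R ^+ (d - 1) * (G1 F) ^+ (d + 2) / 2 * OmegaP A
       - (qF F)%:R ^+ (d - 1) * (G1 F) ^+ (d + 2) / 2 * OmegaM A :> algC)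
  /\
  ((d %% 4)%N = 2%N ->
   (SQ A)%:R + (ZR A)%:R / 2
     = (#|A|%:R ^+ 2) / 2
       + (qF F)%:R ^+ (3 * d %/ 2) / 2 * OmegaP A
       - (qF F)%:R ^+ (3 * d %/ 2) / 2 * OmegaM A :> algC).
Proof.
move=> oddF d_ge2 evend; have d_gt0 : (0 < d)%N by apply: ltnW.
have count := SQ_ZR_fourier A oddF evend d_gt0.
by split=> // d_mod4; rewrite count (G1_expr_mod4 oddF d_mod4).
Qed.
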